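(* Let $n>1$, let $R\in\mathbb{R}^{n\times n}$ be any matrix, let $C\in\mathbb{R}_{\geq 0}^{n\times n}$ be column-stochastic ($\mathbf{1}^\top C=\mathbf{1}^\top$), and let $\gamma>0$. Let ${\bm x}_0\in\mathbb{R}^n$, ${\bm s}_0=\mathbf{0}$, and let $(\check{\bm x}_k)_{k\ge 0}$, $(\check{\bm s}_k)_{k\ge0}$ be arbitrary sequences in $\mathbb{R}^n$ (the quantized values transmitted by the agents). Define for $k\in\mathbb{Z}_{\ge 0}$ \[ {\bm x}_{k+1} = {\bm x}_k + \gamma{\bm s}_k + (R-I)\check{\bm x}_k,\qquad {\bm s}_{k+1} = {\bm x}_k - {\bm x}_{k+1} + {\bm s}_k + (C-I)\check{\bm s}_k . \] Then for all $k\in\mathbb{Z}_{\geq 0}$, $\mathbf{1}^{\top}({\bm x}_k+{\bm s}_k)=\mathbf{1}^{\top}{\bm x}_0$; in particular the quantity $\frac1n\mathbf{1}^\top({\bm x}_k+{\bm s}_k)$ equals the initial average $\frac1n\mathbf{1}^\top{\bm x}_0$ for all $k$.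
   Context: In the paper, $R$ is the row-stochastic ''pull'' matrix with $r_{ji}=1/(1+d_j^{\mathrm{in}})$ for $v_i$ an in-neighbor of $v_j$ or $i=j$ (and $0$ otherwise), $C$ is the column-stochastic ''push'' matrix with $c_{lj}=1/(1+d_j^{\mathrm{out}})$ for $v_l$ an out-neighbor of $v_j$ or $l=j$ (and $0$ otherwise), on a directed graph with $n$ nodes; $\check{\bm x}_k,\check{\bm s}_k$ are quantized versions of ${\bm x}_k,{\bm s}_k$. $\mathbf{1}$ is the all-ones vector. *)

From HB Require Import structures.
From mathcomp Require Import all_boot all_order all_algebra.
From mathcomp Require Import reals.
Set Implicit Arguments. Unset Strict Implicit. Unset Printing Implicit Defensive.
Import Order.TTheory GRing.Theory Num.Theory.
Local Open Scope ring_scope.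

Definition nonneg_mx (K : realType) (n : nat) (C : 'M[K]_n) : Prop :=
  forall i j, 0 <= C i j.

Definition col_stochastic (K : realType) (n : nat) (C : 'M[K]_n) : Prop :=
  (const_mx 1 : 'rV[K]_n) *m C = const_mx 1.

From HB Require Import structures.
From mathcomp Require Import all_boot all_order all_algebra.
From mathcomp Require Import reals.
Import Order.TTheory GRing.Theory Num.Theory.
Local Open Scope ring_scope.

(* The tracking variable s is built so that x + s changes at step k only by
   (C - I) sq_k, which the row 1^T annihilates because C is column-stochastic.
   Hence 1^T (x + s) never moves from 1^T (x_0 + s_0) = 1^T x_0, whatever the
   update of x and the quantized values are. *)

Lemma mulmx_fixed_row_subr1 {R : pzRingType} {n : nat} {u : 'rV[R]_n}
    {C : 'M[R]_n} :
  u *m C = u -> forall v : 'cV[R]_n, u *m ((C - 1%:M) *m v) = 0.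
Proof. by move=> uC v; rewrite mulmxA mulmxBr uC mulmx1 subrr mul0mx. Qed.

Section TrackingInvariant.

Context {R : pzRingType} {n : nat} {u : 'rV[R]_n} {x s d : nat -> 'cV[R]_n}.
Hypothesis s0 : s 0%N = 0.
Hypothesis sS : forall k, s k.+1 = x k - x k.+1 + s k + d k.
Hypothesis ud0 : forall k, u *m d k = 0.

Lemma tracking_sum_step k : x k.+1 + s k.+1 = x k + s k + d k.
Proof. by rewrite sS !addrA [x k.+1 + x k]addrC addrK. Qed.

Lemma mulmx_tracking_sum_invariant k : u *m (x k + s k) = u *m x 0%N.
Proof.
elim: k => [|k IHk]; first by rewrite s0 addr0.
by rewrite tracking_sum_step mulmxDr ud0 addr0 IHk.
Qed.

End TrackingInvariant.

Theorem lemma1 (K : realType) (n : nat) (Rm C : 'M[K]_n) (gamma : K)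
  (x s xq sq : nat -> 'cV[K]_n) :
  (1 < n)%N ->
  nonneg_mx C -> col_stochastic C ->
  0 < gamma ->
  s 0%N = 0 ->
  (forall k : nat, x k.+1 = x k + gamma *: s k + (Rm - 1%:M) *m xq k) ->
  (forall k : nat, s k.+1 = x k - x k.+1 + s k + (C - 1%:M) *m sq k) ->
  forall k : nat,
    (const_mx 1 : 'rV[K]_n) *m (x k + s k) = (const_mx 1 : 'rV[K]_n) *m x 0%N
    /\ n%:R^-1 *: ((const_mx 1 : 'rV[K]_n) *m (x k + s k))
       = n%:R^-1 *: ((const_mx 1 : 'rV[K]_n) *m x 0%N).
Proof.
move=> _ _ colC _ s0 _ sS k.
have ones_kill_sq j := mulmx_fixed_row_subr1 colC (sq j).
by rewrite (mulmx_tracking_sum_invariant s0 sS ones_kill_sq).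
Qed.
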